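(* Let $\lambda,\nu$ be partitions and $s$ a nonnegative integer with $|\nu|\le|\lambda|+s$ and $\mathrm{Std}^0_s(\nu\setminus\lambda)\ne\emptyset$, and suppose that $\mathsf t_{k\leftrightarrow k+1}$ exists for every $\mathsf t\in\mathrm{Std}^0_s(\nu\setminus\lambda)$ and every $1\le k\le s-1$. Then neither of the skew partitions $\nu\ominus(\lambda\cap\nu)$ and $\lambda\ominus(\lambda\cap\nu)$ contains two nodes in the same column.
   Context: $\lambda\cap\nu$ is the partition with parts $\min\{\lambda_i,\nu_i\}$; for $\alpha\subseteq\beta$, $\beta\ominus\alpha$ is the set difference of Young diagrams. $\pm\varepsilon_i$ ($i\ge1$) adds/removes a box in row $i$, $\varepsilon_0=0$. $\mathrm{Std}_s(\nu\setminus\lambda)$ is the set of sequences $\mathsf t=(-\varepsilon_{i_1},+\varepsilon_{j_1},\dots,-\varepsilon_{i_s},+\varepsilon_{j_s})$, $i_k,j_k\ge0$, such that with $\mathsf t(0)=\lambda$, $\mathsf t(k-\frac12)=\mathsf t(k-1)-\varepsilon_{i_k}$, $\mathsf t(k)=\mathsf t(k-\frac12)+\varepsilon_{j_k}$ all are partitions and $\mathsf t(s)=\nu$; $(-\varepsilon_{i_k},+\varepsilon_{j_k})$ is the $k$-th integral step. $\mathrm{Std}^0_s(\nu\setminus\lambda)$ is the subset of those with no integral step $(-\varepsilon_0,+\varepsilon_0)$ and with $\#\{k:i_k=i\}\le\lambda_i$ for every $i\ge1$. $\mathsf t_{k\leftrightarrow k+1}$ is the sequence obtained by interchanging the $k$-th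 and $(k+1)$-th integral steps; it exists if it lies in $\mathrm{Std}_s(\nu\setminus\lambda)$. *)

From mathcomp Require Import all_boot.
Set Implicit Arguments. Unset Strict Implicit. Unset Printing Implicit Defensive.

Definition is_part (p : seq nat) : bool := sorted geq p && all (fun x => 0 < x) p.

(* Row i (i >= 1) of a partition; row 0 is 0 (never used for boxes). *)
Definition row (p : seq nat) (i : nat) : nat :=
  if i is i'.+1 then nth 0 p i' else 0.

(* Intermediate shapes are represented by their row-length functions
   (rows indexed from 1). *)
Definition shape := nat -> nat.

Definition is_part_fun (f : shape) : Prop := forall i, 0 < i -> f i.+1 <= f i.

(* +eps_j : add a box in row j (eps_0 = 0) *)
Definition add_box (f : shape) (j : nat) : shape :=
  fun r => if (j != 0) && (r == j) then (f r).+1 else f r.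
(* -eps_i : remove a box from row i (eps_0 = 0); only meaningful if f i > 0 *)
Definition rem_box (f : shape) (i : nat) : shape :=
  fun r => if (i != 0) && (r == i) then (f r).-1 else f r.

(* An integral step (-eps_i, +eps_j) is encoded by the pair (i, j). *)
Definition step := (nat * nat)%type.

Definition apply_step (f : shape) (st : step) : shape :=
  add_box (rem_box f st.1) st.2.

Definition state (lam : seq nat) (t : seq step) (k : nat) : shape :=
  foldl apply_step (row lam) (take k t).

Definition Std (s : nat) (lam nu : seq nat) (t : seq step) : Prop :=
  size t = s /\
  (forall k, k < s ->
     let f := state lam t k in
     let st := nth (0, 0) t k in
     (st.1 = 0 \/ 0 < f st.1) /\
     is_part_fun (rem_box f st.1) /\
     is_part_fun (apply_step f st)) /\
  (forall r, 0 < r -> state lam t s r = row nu r).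

Definition Std0 (s : nat) (lam nu : seq nat) (t : seq step) : Prop :=
  Std s lam nu t /\
  (forall k, k < s -> nth (0, 0) t k <> (0, 0)) /\
  (forall i, 0 < i -> count (fun st : step => st.1 == i) t <= row lam i).

(* t_{k <-> k+1} : interchange the k-th and (k+1)-th integral steps (1-indexed) *)
Definition swap_steps (t : seq step) (k : nat) : seq step :=
  set_nth (0, 0) (set_nth (0, 0) t k.-1 (nth (0, 0) t k)) k (nth (0, 0) t k.-1).

Definition pcap (lam nu : seq nat) : seq nat := [seq minn x.1 x.2 | x <- zip lam nu].

Definition in_skew (beta alpha : seq nat) (r c : nat) : bool :=
  (0 < r) && (row alpha r < c <= row beta r).

Definition no_two_in_column (beta alpha : seq nat) : Prop :=
  forall r1 r2 c, r1 < r2 -> in_skew beta alpha r1 c -> in_skew beta alpha r2 c -> False.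

From mathcomp Require Import all_boot zify.

(* Adjacent swaps of integral steps keep a sequence in Std0 (they do not change
   the multiset of steps), so any subsequence of a t in Std0 can be moved to the
   front, and the shape reached after it is a partition.  Moving first the a steps
   that add a box to row q+1 without removing one there gives
   lam_(q+1) + a <= lam_q, while a >= nu_(q+1) - lam_(q+1); hence
   nu_(q+1) <= lam_q.  Moving first the b steps that remove a box from row q
   gives lam_(q+1) <= lam_q - b <= nu_q.  These interlacing inequalities rule out
   two nodes in one column of nu ⊖ (lam ∩ nu) and of lam ⊖ (lam ∩ nu). *)

Definition adds_box_in (r : nat) : pred step :=
  fun st => (st.2 == r) && (st.1 != r).
Definition removes_box_from (r : nat) : pred step :=
  fun st => (st.1 == r) && (st.2 != r).

Lemma apply_step_le (f : nat -> nat) i j r : (i = 0 \/ 0 < f i) ->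
  apply_step f (i, j) r <= f r + adds_box_in r (i, j).
Proof.
rewrite /apply_step /add_box /rem_box /adds_box_in /=.
case: (eqVneq j r) => [->|jr]; case: (eqVneq i r) => [->|ir];
  rewrite ?eqxx ?andbT ?andbF //=.
all: try rewrite (eq_sym r i) (negbTE ir).
all: try rewrite (eq_sym r j) (negbTE jr).
all: rewrite ?andbF /=; case: (eqVneq r 0) => r0; rewrite ?r0 ?(negbTE r0) /=; lia.
Qed.

Lemma apply_step_ge (f : nat -> nat) i j r :
  f r <= apply_step f (i, j) r + removes_box_from r (i, j).
Proof.
rewrite /apply_step /add_box /rem_box /removes_box_from /=.
case: (eqVneq j r) => [->|jr]; case: (eqVneq i r) => [->|ir];
  rewrite ?eqxx ?andbT ?andbF //=.
all: try rewrite (eq_sym r i) (negbTE ir).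
all: try rewrite (eq_sym r j) (negbTE jr).
all: rewrite ?andbF /=; case: (eqVneq r 0) => r0; rewrite ?r0 ?(negbTE r0) /=; lia.
Qed.

Lemma foldl_apply_step_ge (f : nat -> nat) (l : seq step) r :
  f r <= foldl apply_step f l r + count (removes_box_from r) l.
Proof.
elim: l f => [|[i j] l IH] f /=; first by rewrite addn0.
have := apply_step_ge f i j r; have := IH (apply_step f (i, j)); lia.
Qed.

Lemma foldl_adds_box_in (f : nat -> nat) (l : seq step) r : 0 < r -> all (adds_box_in r) l ->
  foldl apply_step f l r = f r + size l.
Proof.
move=> r_gt0; elim: l f => [|[i j] l IH] f /=; first by rewrite addn0.
case/andP=> /andP[/= /eqP-> ir] /IH->.
rewrite /apply_step /add_box /rem_box /= eqxx (eq_sym r i) (negbTE ir) andbF -lt0n r_gt0.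
by rewrite addnS.
Qed.

Lemma foldl_adds_box_in_other (f : nat -> nat) (l : seq step) (r r' : nat) : r' != r -> all (adds_box_in r) l ->
  foldl apply_step f l r' <= f r'.
Proof.
move=> r'r; elim: l f => [|[i j] l IH] f //=.
case/andP=> /andP[/= /eqP-> _] /IH /leq_trans; apply.
rewrite /apply_step /add_box /rem_box /= (negbTE r'r) andbF.
by case: ifP => // _; apply: leq_pred.
Qed.

Lemma foldl_removes_box_from (f : nat -> nat) (l : seq step) r : 0 < r -> all (removes_box_from r) l ->
  foldl apply_step f l r = f r - size l.
Proof.
move=> r_gt0; elim: l f => [|[i j] l IH] f /=; first by rewrite subn0.
case/andP=> /andP[/= /eqP-> jr] /IH->.
rewrite /apply_step /add_box /rem_box /= eqxx (eq_sym r j) (negbTE jr) andbF -lt0n r_gt0.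
by rewrite subnS predn_sub.
Qed.

Lemma foldl_removes_box_from_other (f : nat -> nat) (l : seq step) (r r' : nat) : r' != r -> all (removes_box_from r) l ->
  f r' <= foldl apply_step f l r'.
Proof.
move=> r'r; elim: l f => [|[i j] l IH] f //=.
case/andP=> /andP[/= /eqP-> _] /IH le_foldl; apply: leq_trans _ (le_foldl _).
rewrite /apply_step /add_box /rem_box /= (negbTE r'r) andbF.
by case: ifP.
Qed.

Lemma state_succ (lam : seq nat) (t : seq step) k : k < size t ->
  state lam t k.+1 = apply_step (state lam t k) (nth (0, 0) t k).
Proof. by move=> kt; rewrite /state (take_nth (0, 0) kt) -cats1 foldl_cat. Qed.

Lemma row_mono (p : seq nat) a b : is_part p -> 0 < a <= b -> row p b <= row p a.
Proof.
case/andP=> p_sorted _; case: a b => [|a] [|b] //= ab.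
have [bp|pb] := ltnP b (size p); last by rewrite nth_default.
have geq_trans : transitive geq by move=> x y z yx zy; apply: leq_trans zy yx.
by apply: (sorted_leq_nth geq_trans _ 0 p_sorted) => //; [exact: leqnn | rewrite inE; lia].
Qed.

Lemma is_part_fun_row (p : seq nat) : is_part p -> is_part_fun (row p).
Proof. by move=> p_part i i_gt0; apply: row_mono => //; rewrite i_gt0 /=. Qed.

Lemma Std_state_part {s : nat} {lam nu : seq nat} {t : seq step} k : is_part lam -> Std s lam nu t -> k <= s ->
  is_part_fun (state lam t k).
Proof.
move=> lam_part [t_size [t_valid _]]; case: k => [|k] ks.
  by rewrite /state take0; apply: is_part_fun_row.
by rewrite state_succ ?t_size //; case: (t_valid k ks) => _ [].
Qed.

Lemma Std_state_le {s : nat} {lam nu : seq nat} {t : seq step} k r : Std s lam nu t -> k <= s ->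
  state lam t k r <= row lam r + count (adds_box_in r) (take k t).
Proof.
move=> [t_size [t_valid _]]; elim: k => [|k IH] ks.
  by rewrite /state take0 addn0.
have kt : k < size t by rewrite t_size.
rewrite state_succ // (take_nth (0, 0) kt) -cats1 count_cat /= addn0 addnA.
have [step_valid _] := t_valid k ks; move: step_valid (IH (ltnW ks)).
case: (nth (0, 0) t k) => i j /= ij_valid IHk.
by apply: leq_trans (apply_step_le _ _ _ _ ij_valid) _; rewrite leq_add2r.
Qed.

Section SwapClosed.
Context {T : Type} {S : seq T -> Prop}.
Hypothesis S_swap : forall u x y w, S (u ++ x :: y :: w) -> S (u ++ y :: x :: w).

Lemma swap_closed_move_after t u v x : S (u ++ x :: t ++ v) -> S (u ++ t ++ x :: v).
Proof.
elim: t u => [|y t IH] u //= /S_swap.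
by rewrite -cat_rcons => /IH; rewrite cat_rcons.
Qed.

Lemma swap_closed_filter_prefix (P : pred T) t u v :
  S (u ++ t ++ v) -> exists w, S (u ++ filter P t ++ w).
Proof.
elim: t u v => [|x t IH] u v /=; first by exists v.
case: (P x); last by move/swap_closed_move_after/IH.
by rewrite -cat_rcons => /IH [w]; exists w; rewrite -cat_rcons.
Qed.
End SwapClosed.

Lemma swap_steps_cat (u : seq step) x y w :
  swap_steps (u ++ x :: y :: w) (size u).+1 = u ++ y :: x :: w.
Proof. by rewrite /swap_steps /=; elim: u => //= a u ->. Qed.

Lemma Std0_swap {s : nat} {lam nu : seq nat} :
  (forall t, Std0 s lam nu t -> forall k, 1 <= k <= s - 1 -> Std s lam nu (swap_steps t k)) ->
  forall u x y w, Std0 s lam nu (u ++ x :: y :: w) -> Std0 s lam nu (u ++ y :: x :: w).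
Proof.
move=> swap_closed u x y w t_Std0; set t := u ++ x :: y :: w in t_Std0 *.
have [[t_size _] [t_nonzero t_count]] := t_Std0.
have t_perm : perm_eq t (u ++ y :: x :: w).
  by rewrite perm_cat2l; apply/permP => a /=; rewrite addnCA.
split; last split.
- rewrite -swap_steps_cat; apply: swap_closed => //.
  by move: t_size; rewrite size_cat /=; lia.
- move=> k ks k_zero.
  have zero_in_t : (0, 0) \in t.
    by rewrite (perm_mem t_perm) -k_zero mem_nth // -(perm_size t_perm) t_size.
  apply: (t_nonzero (index (0, 0) t)); last exact: nth_index.
  by rewrite -t_size index_mem.
- by move=> i i_gt0; rewrite -(permP t_perm); apply: t_count.
Qed.

Section SwapClosedStd0.
Context {lam nu : seq nat} {s : nat} {t : seq step}.
Hypothesis lam_part : is_part lam.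
Hypothesis swap_closed :
  forall t, Std0 s lam nu t -> forall k, 1 <= k <= s - 1 -> Std s lam nu (swap_steps t k).
Hypothesis t_Std0 : Std0 s lam nu t.

Let t_Std : Std s lam nu t. Proof. by case: t_Std0. Qed.

Let final_state r : 0 < r -> foldl apply_step (row lam) t r = row nu r.
Proof.
have [t_size [_ t_final]] := t_Std.
by move=> r_gt0; rewrite -t_final // /state -t_size take_size.
Qed.

Lemma Std0_filter_part (P : pred step) :
  is_part_fun (foldl apply_step (row lam) (filter P t)).
Proof.
have [w [t'_Std _]] : exists w, Std0 s lam nu (filter P t ++ w).
  apply: (swap_closed_filter_prefix (Std0_swap swap_closed) P t [::] [::]).
  by rewrite cats0.
have [t'_size _] := t'_Std.
have -> : foldl apply_step (row lam) (filter P t)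
        = state lam (filter P t ++ w) (size (filter P t)) by rewrite /state take_size_cat.
by apply: (Std_state_part _ lam_part t'_Std); rewrite -t'_size size_cat leq_addr.
Qed.

Lemma row_nu_succ_le_lam q : 0 < q -> row nu q.+1 <= row lam q.
Proof.
move=> q_gt0; have [t_size _] := t_Std.
have nu_le := Std_state_le s q.+1 t_Std (leqnn s).
rewrite /state -t_size take_size final_state // in nu_le.
have := Std0_filter_part (adds_box_in q.+1) q q_gt0.
rewrite foldl_adds_box_in ?filter_all // size_filter.
have q_neq : q != q.+1 by rewrite neq_ltn ltnSn.
have := foldl_adds_box_in_other (row lam) _ _ _ q_neq (filter_all (adds_box_in q.+1) t).
lia.
Qed.

Lemma row_lam_succ_le_nu q : 0 < q -> row lam q.+1 <= row nu q.
Proof.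
move=> q_gt0; have lam_le := foldl_apply_step_ge (row lam) t q.
rewrite final_state // in lam_le.
have := Std0_filter_part (removes_box_from q) q q_gt0.
rewrite (foldl_removes_box_from _ _ q) ?filter_all // size_filter.
have q_neq : q.+1 != q by rewrite neq_ltn ltnSn orbT.
have := foldl_removes_box_from_other (row lam) _ _ _ q_neq (filter_all (removes_box_from q) t).
lia.
Qed.
End SwapClosedStd0.

Lemma row_pcap (alpha beta : seq nat) r :
  row (pcap alpha beta) r = minn (row alpha r) (row beta r).
Proof.
case: r => //= r; elim: alpha beta r => [|a alpha IH] [|b beta] [|r] //=.
all: by rewrite ?min0n //; apply: IH.
Qed.

Lemma pcapC (alpha beta : seq nat) : pcap alpha beta = pcap beta alpha.
Proof.
elim: alpha beta => [|a alpha IH] [|b beta] //=.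
by congr (_ :: _); [exact: minnC | exact: IH].
Qed.

Lemma no_two_in_column_interlaced (alpha beta : seq nat) : is_part alpha ->
  (forall q, 0 < q -> row beta q.+1 <= row alpha q) -> no_two_in_column beta (pcap alpha beta).
Proof.
move=> alpha_part interlaced r1 r2 c r12.
rewrite /in_skew !row_pcap => /and3P[r1_gt0 c_gt1 c_le1] /and3P[_ c_gt2 c_le2].
have := interlaced r2.-1; have := row_mono alpha r1 r2.-1 alpha_part.
rewrite prednK; last by apply: leq_ltn_trans r12.
lia.
Qed.

Theorem lemma4p22 (lam nu : seq nat) (s : nat) :
  is_part lam -> is_part nu ->
  sumn nu <= sumn lam + s ->
  (exists t, Std0 s lam nu t) ->
  (forall t, Std0 s lam nu t -> forall k, 1 <= k <= s - 1 -> Std s lam nu (swap_steps t k)) ->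
  no_two_in_column nu (pcap lam nu) /\ no_two_in_column lam (pcap lam nu).
Proof.
move=> lam_part nu_part _ [t t_Std0] swap_closed.
split; last rewrite pcapC; apply: no_two_in_column_interlaced => //.
- exact: row_nu_succ_le_lam lam_part swap_closed t_Std0.
- exact: row_lam_succ_le_nu lam_part swap_closed t_Std0.
Qed.
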